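(* Let $(f_0, M_0, \Lambda_0, \mathcal{Q}_0)$ be a SIMDG with induced set $\mathcal{P}_0$ and training distribution $P_{\mathrm{tr}}$, let $\mathcal{F}$ be a class of measurable functions $\mathbb{R}^p\to\mathbb{R}$, let $\mathcal{I}_0$ be the set of invariant functions in $\mathcal{F}$, and let $f_\star\in\mathcal{I}_0$ be the BCF, as in the context. Suppose that (i) for all $f,g\in\mathcal{F}$ and all $P\in\mathcal{P}_0$, $f(X)=g(X)$ $P_{\mathrm{tr}}$-a.s. implies $f(X)=g(X)$ $P$-a.s.; and (ii) $\inf_{P\in\mathcal{P}_0}\mathrm{E}_P\big[(\mathrm{E}_P[\gamma_0(V)\mid R^\top X]-\mathrm{E}_P[\gamma_0(V)\mid X])^2\big]=0$. Then, with $\mathcal{R}(P,f):=\mathrm{E}_P[(Y-f(X))^2]$, $$\mathcal{R}(P_{\mathrm{tr}},f_\star)=\inf_{f\in\mathcal{I}_0}\mathcal{R}(P_{\mathrm{tr}},f).$$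
   Context: Fix integers $p,r\ge 1$. A SIMDG is a tuple $(f_0, M_0, \Lambda_0, \mathcal{Q}_0)$ where $f_0:\mathbb{R}^p\to\mathbb{R}$ is measurable, $M_0\in\mathbb{R}^{p\times r}$, $\Lambda_0$ is a distribution on $\mathbb{R}^{1+p}$ such that $(U,V)\sim\Lambda_0$ satisfies $\mathrm{E}[(U,V)]=0$ and $\mathrm{E}[\|(U,V)\|_2^2]<\infty$, and $\mathcal{Q}_0$ is a set of distributions on $\mathbb{R}^r$. For each $Q\in\mathcal{Q}_0$ the model induces a distribution $P$ of $(U,V,X,Y,Z)$ by drawing $((U,V),Z)\sim\Lambda_0\otimes Q$ and setting $X = M_0 Z + V$, $Y = f_0(X)+U$; $\mathcal{P}_0$ is the set of all such induced distributions. Standing setting: $\sup_{P\in\mathcal{P}_0}\mathrm{E}_P[f_0(X)]^2<\infty$; $Q_{\mathrm{tr}}\in\mathcal{Q}_0$ satisfies $\mathrm{E}_{Q_{\mathrm{tr}}}[Z]=0$ and $\mathrm{E}_{Q_{\mathrm{tr}}}[ZZ^\top]\succ 0$; $P_{\mathrm{tr}}$ is the distribution induced by $Q_{\mathrm{tr}}$. A function $f\in\mathcal{F}$ is invariant if the distribution of $Y-f(X)$ under $P_{\mathrm{tr}}$ equals its distribution under $P$ for every $P\in\mathcal{P}_0$; $\mathcal{I}_0$ is the set of invariant $f\in\mathcal{F}$. Let $q=\mathrm{rank}(M_0)$; if $q<p$, $R\in\mathbb{R}^{p\times(p-q)}$ has columns forming an orthonormal basis of $\ker(M_0^\top)$,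 and if $q=p$, $R$ is the zero vector in $\mathbb{R}^{p\times 1}$. $\gamma_0(v):=\mathrm{E}_{P_{\mathrm{tr}}}[U\mid V=v]$. The BCF is $f_\star(x):=f_0(x)+\mathrm{E}_{P_{\mathrm{tr}}}[\gamma_0(V)\mid R^\top X = R^\top x]$, defined for $P_{\mathrm{tr}}$-a.e. $x$. *)

From HB Require Import structures.
From mathcomp Require Import all_boot all_order all_algebra.
From mathcomp Require Import all_classical all_reals all_analysis.
Set Implicit Arguments. Unset Strict Implicit. Unset Printing Implicit Defensive.
Import Order.TTheory GRing.Theory Num.Theory.
Local Open Scope classical_set_scope.
Local Open Scope ring_scope.

(* Vectors of R^n are n-tuples (measurable structure: product Borel sigma-algebra,
   generated by the coordinates).  Matrix-vector product. *)
Definition mv (R : realType) (m n : nat) (M : 'M[R]_(m, n)) (z : n.-tuple R)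
  : m.-tuple R :=
  [tuple \sum_(j < n) M i j * tnth z j | i < m].

Definition vadd (R : realType) (n : nat) (a b : n.-tuple R) : n.-tuple R :=
  [tuple tnth a i + tnth b i | i < n].

Definition orthonormal_basis_ker (R : realType) (p r k : nat)
  (M0 : 'M[R]_(p, r)) (Rm : 'M[R]_(p, k)) : Prop :=
  [/\ Rm^T *m Rm = 1%:M,
      M0^T *m Rm = 0
    & forall v : 'cV[R]_p, M0^T *m v = 0 -> exists c : 'cV[R]_k, v = Rm *m c].

Definition is_cond_exp (R : realType) (d : measure_display) (Om : measurableType d)
  (d' : measure_display) (S : measurableType d')
  (P : {measure set Om -> \bar R}) (Y : Om -> R) (W : Om -> S) (h : S -> R) : Prop :=
  [/\ measurable_fun setT h,
      P.-integrable setT (EFin \o Y),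
      P.-integrable setT (EFin \o (h \o W))
    & forall B : set S, measurable B ->
        (\int[P]_(x in W @^-1` B) (Y x)%:E = \int[P]_(x in W @^-1` B) (h (W x))%:E)%E].

(* The underlying sample space ((U,V),Z) of a SIMDG and its coordinates. *)
Notation Omega R p r := ((R * p.-tuple R) * r.-tuple R)%type.

Section SIMDG.
Variables (R : realType) (p r : nat) (M0 : 'M[R]_(p, r)) (f0 : p.-tuple R -> R).
Definition Uc (w : Omega R p r) : R := w.1.1.
Definition Vc (w : Omega R p r) : p.-tuple R := w.1.2.
Definition Zc (w : Omega R p r) : r.-tuple R := w.2.
Definition Xc (w : Omega R p r) : p.-tuple R := vadd (mv M0 (Zc w)) (Vc w).
Definition Yc (w : Omega R p r) : R := f0 (Xc w) + Uc w.
End SIMDG.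

(* The induced distribution P of (U,V,X,Y,Z) for Q is the image of Lambda0 (x) Q
   under w |-> (Uc w, Vc w, Xc w, Yc w, Zc w); we work with Lambda0 (x) Q directly. *)
Definition risk (R : realType) (p r : nat) (M0 : 'M[R]_(p, r)) (f0 : p.-tuple R -> R)
  (P : {measure set (Omega R p r) -> \bar R}) (f : p.-tuple R -> R) : \bar R :=
  (\int[P]_w ((Yc M0 f0 w - f (Xc M0 w)) ^+ 2)%:E)%E.

Definition invariant_set (R : realType) (p r : nat) (M0 : 'M[R]_(p, r))
  (f0 : p.-tuple R -> R) (L0 : probability (R * p.-tuple R)%type R)
  (Q0 : set (probability (r.-tuple R) R)) (Qtr : probability (r.-tuple R) R)
  (F : set (p.-tuple R -> R)) : set (p.-tuple R -> R) :=
  [set f | F f /\ forall Q, Q0 Q -> forall B : set R, measurable B ->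
     (L0 \x Qtr)%E ((fun w => Yc M0 f0 w - f (Xc M0 w)) @^-1` B)
     = (L0 \x Q)%E ((fun w => Yc M0 f0 w - f (Xc M0 w)) @^-1` B)].

Definition posdef (R : realType) (n : nat) (S : 'M[R]_n) : Prop :=
  forall v : 'rV[R]_n, v != 0 -> 0 < (v *m S *m v^T) 0 0.

Definition second_moment (R : realType) (r : nat) (Q : probability (r.-tuple R) R)
  : 'M[R]_r :=
  \matrix_(i, j) fine (\int[Q]_z (tnth z i * tnth z j)%:E)%E.

From HB Require Import structures.
From mathcomp Require Import all_boot all_order all_algebra.
From mathcomp Require Import all_classical all_reals all_analysis.
From mathcomp Require Import measurable_realfun ring lra.
Set Implicit Arguments. Unset Strict Implicit. Unset Printing Implicit Defensive.
Import Order.TTheory GRing.Theory Num.Theory.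
Import HBSimple HBNNSimple numFieldNormedType.Exports.
Local Open Scope classical_set_scope.
Local Open Scope ring_scope.

(* Since R^T M_0 = 0, the variable W := R^T X = R^T V is a function of (U, V) alone.
   Hence hstar(W) = E_tr[U | W] by the tower property, the residual of the BCF is
   Y - f_*(X) = U - hstar(W), and the law of (U, W) is the same under every P in P_0.

   Let f be invariant, let P in P_0, and let g_R(W) = E_P[gamma_0(V) | W] and
   g_X(X) = E_P[gamma_0(V) | X]; as Z is independent of (U, V), g_X(X) = E_P[U | X].
   Since a conditional expectation is the L^2-closest function of the conditioning
   variable, for every t > 0
     R(P_tr, f_* ) = E_tr[(U - hstar(W))^2] <= E_tr[(U - g_R(W))^2] = E_P[(U - g_R(W))^2]
       <= (1 + t) E_P[(U - g_X(X))^2] + (1 + 1/t) E_P[(g_R(W) - g_X(X))^2]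
       <= (1 + t) R(P, f) + (1 + 1/t) E_P[(g_R(W) - g_X(X))^2].
   Invariance gives R(P, f) = R(P_tr, f), and by (ii) P can be chosen with the last
   expectation below t^2; letting t -> 0 gives R(P_tr, f_* ) <= R(P_tr, f).  The reverse
   inequality holds because f_* agrees a.s. with an element of I_0. *)

Lemma sqrrD_le (R : realFieldType) (a b t : R) : 0 < t ->
  (a + b) ^+ 2 <= (1 + t) * a ^+ 2 + (1 + t^-1) * b ^+ 2.
Proof.
move=> t_gt0.
have tV : t * t^-1 = 1 by rewrite mulfV // gt_eqF.
have bV : b ^+ 2 * (t * t^-1) = b ^+ 2 by rewrite tV mulr1.
have sq_ge0 := sqr_ge0 (t * a - b).
have tV_gt0 : 0 < t^-1 by rewrite invr_gt0.
suff : 0 <= t * (t * a ^+ 2 + t^-1 * b ^+ 2 - 2 * a * b) by rewrite pmulr_rge0 //; nra.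
nra.
Qed.

Lemma ler_of_forall_perturb (R : realFieldType) (a b : R) : 0 <= b ->
  (forall t, 0 < t -> t <= 1 -> a <= (1 + t) * b + t ^+ 2 + t) -> a <= b.
Proof.
move=> b_ge0 ab; apply/ler_addgt0Pr => e e_gt0.
pose t := Num.min 1 (e / (b + 2)).
have t_gt0 : 0 < t by rewrite lt_min ltr01 divr_gt0 //; lra.
have t_le1 : t <= 1 by rewrite ge_min lexx.
have te : t * (b + 2) <= e by rewrite -ler_pdivlMr ?ge_min ?lexx ?orbT //; lra.
have : t ^+ 2 <= t by rewrite expr2 ger_pMr.
have := ab t t_gt0 t_le1; nra.
Qed.

Lemma lee_of_forall_perturb (R : realFieldType) (a : \bar R) (b : R) : 0 <= b ->
  (forall t, 0 < t -> t <= 1 -> (a <= ((1 + t) * b + t ^+ 2 + t)%:E)%E) ->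
  (a <= b%:E)%E.
Proof.
case: a => [a | | ] b_ge0 ab; last exact: leNye.
- by rewrite lee_fin; apply: ler_of_forall_perturb => // t t0 t1; rewrite -lee_fin ab.
- by have := ab 1 ltr01 (lexx _); rewrite leye_eq.
Qed.

Lemma measurableT_preimage d1 d2 (T1 : measurableType d1) (T2 : measurableType d2)
  (f : T1 -> T2) (B : set T2) :
  measurable_fun setT f -> measurable B -> measurable (f @^-1` B).
Proof. by move=> mf mB; rewrite -[f @^-1` B]setTI; exact: mf. Qed.

Section square_integrable.
Context d (T : measurableType d) (R : realType) (mu : {measure set T -> \bar R}).

Definition square_integrable (f : T -> R) :=
  measurable_fun setT f /\ mu.-integrable setT (fun x => (f x ^+ 2)%:E).

Lemma square_integrable_mul f g : square_integrable f -> square_integrable g ->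
  mu.-integrable setT (fun x => (f x * g x)%:E).
Proof.
move=> [mf if2] [mg ig2].
apply: (le_integrable _ _ _ (integrableD measurableT if2 ig2)) => //.
  by apply/measurable_EFinP; apply: measurable_funM.
move=> x _ /=; rewrite lee_fin normrM [`|f x ^+ 2 + _|]ger0_norm ?addr_ge0 ?sqr_ge0 //.
rewrite -[f x ^+ 2]real_normK ?num_real // -[g x ^+ 2]real_normK ?num_real //.
have := normr_ge0 (f x); have := normr_ge0 (g x).
have := sqr_ge0 (`|f x| - `|g x|); nra.
Qed.

Lemma square_integrableD f g : square_integrable f -> square_integrable g ->
  square_integrable (fun x => f x + g x).
Proof.
move=> [mf if2] [mg ig2]; split; first exact: measurable_funD.
have i := integrableD measurableT (integrableZl measurableT 2 if2)
  (integrableZl measurableT 2 ig2).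
apply: (le_integrable _ _ _ i) => //.
  by apply/measurable_EFinP; apply: measurable_funX; apply: measurable_funD.
move=> x _ /=; rewrite lee_fin.
rewrite [`|(_ + _) ^+ 2|]ger0_norm ?sqr_ge0 // [`|_ + _|]ger0_norm; last first.
  by apply: addr_ge0; apply: mulr_ge0 => //; exact: sqr_ge0.
have := sqr_ge0 (f x - g x); rewrite sqrrB sqrrD; lra.
Qed.

Lemma square_integrableN f : square_integrable f -> square_integrable (fun x => - f x).
Proof.
move=> [mf if2]; split; first exact: measurable_funN.
by under eq_fun do rewrite sqrrN.
Qed.

Lemma square_integrableB f g : square_integrable f -> square_integrable g ->
  square_integrable (fun x => f x - g x).
Proof. by move=> sf sg; apply: square_integrableD => //; exact: square_integrableN. Qed.

Lemma le_integral_sqrD (f g : T -> R) (t : R) : 0 < t ->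
  measurable_fun setT f -> measurable_fun setT g ->
  (\int[mu]_x ((f x + g x) ^+ 2)%:E <=
   (1 + t)%:E * \int[mu]_x (f x ^+ 2)%:E + (1 + t^-1)%:E * \int[mu]_x (g x ^+ 2)%:E)%E.
Proof.
move=> t_gt0 mf mg.
have msqr (u : T -> R) : measurable_fun setT u -> measurable_fun setT (fun x => (u x ^+ 2)%:E).
  by move=> m_u; apply/measurable_EFinP; exact: measurable_funX.
have sqr_ge0E (u : T -> R) x : setT x -> (0 <= (u x ^+ 2)%:E)%E.
  by move=> _; rewrite lee_fin sqr_ge0.
have c1 : (0 <= (1 + t)%:E)%E by rewrite lee_fin; lra.
have c2 : (0 <= (1 + t^-1)%:E)%E by rewrite lee_fin addr_ge0 // invr_ge0 ltW.
rewrite -(ge0_integralZl _ measurableT (msqr _ mf) (sqr_ge0E f) c1).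
rewrite -(ge0_integralZl _ measurableT (msqr _ mg) (sqr_ge0E g) c2).
rewrite -ge0_integralD //; last 4 first.
- by move=> x _; apply: mule_ge0 => //; rewrite lee_fin sqr_ge0.
- by apply: measurable_funeM; exact: msqr.
- by move=> x _; apply: mule_ge0 => //; rewrite lee_fin sqr_ge0.
- by apply: measurable_funeM; exact: msqr.
apply: ge0_le_integral => //.
- by move=> x _; rewrite lee_fin sqr_ge0.
- by apply: msqr; exact: measurable_funD.
- by apply: emeasurable_funD; apply: measurable_funeM; exact: msqr.
by move=> x _; rewrite -!EFinM -EFinD lee_fin sqrrD_le.
Qed.

Lemma eq_integral_sqr_of_law (P1 P2 : {measure set T -> \bar R}) (g : T -> R) :
  measurable_fun setT g ->
  (forall B, measurable B -> P1 (g @^-1` B) = P2 (g @^-1` B)) ->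
  (\int[P1]_x (g x ^+ 2)%:E = \int[P2]_x (g x ^+ 2)%:E)%E.
Proof.
move=> mg law.
have msqr : measurable_fun setT (fun y : R => (y ^+ 2)%:E).
  by apply/measurable_EFinP; exact: measurable_funX.
have sqr_ge0E : {in setT, forall y : R, (0 <= (y ^+ 2)%:E)%E}.
  by move=> y _; rewrite lee_fin sqr_ge0.
have E1 := ge0_integral_pushforward mg P1 measurableT msqr sqr_ge0E.
have E2 := ge0_integral_pushforward mg P2 measurableT msqr sqr_ge0E.
rewrite preimage_setT in E1 E2; rewrite -E1 -E2.
by apply: eq_measure_integral => A mA _; exact: law.
Qed.

Definition truncate (n : nat) (x : R) := if `|x| <= n%:R then x else 0.

Lemma measurable_truncate n (g : T -> R) : measurable_fun setT g ->
  measurable_fun setT (fun x => truncate n (g x)).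
Proof.
move=> mg; apply: measurable_fun_ifT => //.
by apply: measurable_fun_ler => //; exact: measurableT_comp.
Qed.

Lemma integral_sqr_le_of_truncate (g : T -> R) (C : \bar R) : measurable_fun setT g ->
  (forall n, \int[mu]_x (truncate n (g x) ^+ 2)%:E <= C)%E ->
  (\int[mu]_x (g x ^+ 2)%:E <= C)%E.
Proof.
move=> mg le_C.
pose G n x := (truncate n (g x) ^+ 2)%:E.
have mG n : measurable_fun setT (G n).
  by apply/measurable_EFinP; apply: measurable_funX; exact: measurable_truncate.
have G_ge0 n x : setT x -> (0 <= G n x)%E by rewrite /G lee_fin sqr_ge0.
have G_nd x : {homo G^~ x : n m / (n <= m)%N >-> (n <= m)%E}.
  move=> n m nm; rewrite /G lee_fin /truncate.
  case: ifPn => hn; case: ifPn => hm //; rewrite ?expr0n ?sqr_ge0 //.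
  by move: hm; rewrite (le_trans hn) // ler_nat.
have G_lim x : limn (G^~ x) = (g x ^+ 2)%:E.
  apply: cvg_lim => //; apply: cvg_near_cst.
  exists (Num.truncn `|g x|).+1 => // n /= le_n.
  rewrite /G /truncate ifT //; apply: ltW; apply: (lt_le_trans (truncnS_gt _)).
  by rewrite ler_nat.
under eq_integral do rewrite -G_lim.
rewrite (monotone_convergence mu measurableT mG G_ge0 (fun x _ => G_nd x)).
apply: lime_le.
  apply: ereal_nondecreasing_is_cvgn => n m nm.
  by apply: ge0_le_integral => // x _; [exact: G_ge0 | exact: G_nd].
by apply: nearW => n; exact: le_C.
Qed.

End square_integrable.

Section cond_exp.
Context d (T : measurableType d) d' (S : measurableType d') (R : realType).
Variables (mu : {measure set T -> \bar R}) (W : T -> S).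
Hypothesis mW : measurable_fun setT W.

Lemma integrable_mul_indic_comp (u : T -> R) (A : set S) : measurable A ->
  mu.-integrable setT (EFin \o u) ->
  mu.-integrable setT (fun x => (u x * \1_A (W x))%:E).
Proof.
move=> mA iu; apply: (le_integrable _ _ _ iu) => //.
  apply/measurable_EFinP; apply: measurable_funM.
    exact/measurable_EFinP/(measurable_int mu iu).
  by apply: measurableT_comp => //; exact: measurable_indic.
move=> x _ /=; rewrite lee_fin normrM indicE.
by case: (_ \in _); rewrite ?normr1 ?normr0 ?mulr1 ?mulr0.
Qed.

Lemma integral_mul_sfun_comp (u : T -> R) (s : {sfun S >-> R}) :
  mu.-integrable setT (EFin \o u) ->
  (\int[mu]_x (u x * s (W x))%:E =
   \sum_(c <- finmap.enum_fset (fset_set (range s)))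
      (c%:E * \int[mu]_x (u x * \1_(s @^-1` [set c]) (W x))%:E))%E.
Proof.
move=> iu.
have sE y : s y = \sum_(c <- finmap.enum_fset (fset_set (range s)))
                    (c * \1_(s @^-1` [set c]) y).
  by rewrite [LHS]fimfunE fsbig_finite //; exact: fimfunP.
under eq_integral do rewrite sE mulr_sumr -sumEFin.
rewrite integral_sum //.
  apply: eq_bigr => c _; rewrite -integralZl //.
    by apply: eq_integral => x _; rewrite -EFinM mulrCA.
  by apply: integrable_mul_indic_comp => //; exact: measurable_funPTI.
move=> c; under eq_fun do rewrite mulrCA EFinM.
by apply: integrableZl => //; apply: integrable_mul_indic_comp => //; exact: measurable_funPTI.
Qed.

Lemma cvg_integral_mul_approx (u : T -> R) (phi : S -> R)
  (mphi : measurable_fun setT (EFin \o phi)) : (forall y, 0 <= phi y) ->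
  measurable_fun setT u -> mu.-integrable setT (fun x => (u x * phi (W x))%:E) ->
  (fun n => \int[mu]_x (u x * nnsfun_approx measurableT mphi n (W x))%:E)%E
   @ \oo --> (\int[mu]_x (u x * phi (W x))%:E)%E.
Proof.
move=> phi_ge0 m_u iu.
set sn := nnsfun_approx measurableT mphi.
have phi_ge0E z : setT z -> (0 <= (EFin \o phi) z)%E by rewrite /= lee_fin.
have sn_le n y : sn n y <= phi y.
  by rewrite /sn nnsfun_approxE -lee_fin; exact: le_approx.
have sn_cvg y : (fun n => sn n y : R) n @[n --> \oo] --> phi y.
  by have := cvg_nnsfun_approx measurableT mphi phi_ge0E (I : setT y); move/fine_cvg.
have msn n : measurable_fun setT (fun x => (u x * sn n (W x))%:E).
  by apply/measurable_EFinP; apply: measurable_funM => //; exact: measurableT_comp.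
have mlim : measurable_fun setT (fun x => (u x * phi (W x))%:E).
  exact: measurable_int iu.
have cvg_ae : {ae mu, forall x, setT x ->
    (fun n => (u x * sn n (W x))%:E) n @[n --> \oo] --> (u x * phi (W x))%:E}.
  by apply: aeW => x _; apply: cvg_EFin; [exact: nearW | exact: cvgMl_tmp].
have dom : {ae mu, forall x n, setT x ->
    (`|(u x * sn n (W x))%:E| <= `|(u x * phi (W x))%:E|)%E}.
  by apply: aeW => x n _ /=; rewrite lee_fin !normrM ler_wpM2l // !ger0_norm.
by have [_ _] := dominated_convergence measurableT msn mlim cvg_ae
  (integrable_abse iu) dom.
Qed.

Variables (Y : T -> R) (h : S -> R).
Hypothesis ceY : is_cond_exp mu Y W h.

Let mh : measurable_fun setT h. Proof. by case: ceY. Qed.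
Let iY : mu.-integrable setT (EFin \o Y). Proof. by case: ceY. Qed.
Let ihW : mu.-integrable setT (EFin \o (h \o W)). Proof. by case: ceY. Qed.
Let mY : measurable_fun setT Y.
Proof. exact/measurable_EFinP/(measurable_int mu iY). Qed.
Let mhW : measurable_fun setT (h \o W). Proof. exact: measurableT_comp. Qed.

Lemma cond_exp_mul_indic (A : set S) : measurable A ->
  (\int[mu]_x (Y x * \1_A (W x))%:E = \int[mu]_x (h (W x) * \1_A (W x))%:E)%E.
Proof.
move=> mA; case: ceY => _ _ _ /(_ A mA).
rewrite (integral_mkcond (W @^-1` A)) (integral_mkcond (W @^-1` A) (fun x => (h (W x))%:E)).
have indicE' (u : T -> R) x :
    (u x * \1_A (W x))%:E = ((EFin \o u) \_ (W @^-1` A)) x.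
  rewrite /restrict /= indicE; have [WA|WA] := boolP (W x \in A).
    by rewrite mulr1 mem_set //=; exact: set_mem.
  by rewrite mulr0 memNset //= => /mem_set; exact/negP.
move=> eqA; under eq_integral do rewrite indicE'.
by rewrite eqA; apply: eq_integral => x _; rewrite (indicE' (h \o W)).
Qed.

Lemma cond_exp_mul_sfun (s : {sfun S >-> R}) :
  (\int[mu]_x (Y x * s (W x))%:E = \int[mu]_x (h (W x) * s (W x))%:E)%E.
Proof.
rewrite (integral_mul_sfun_comp s iY) (integral_mul_sfun_comp s ihW).
by apply: eq_bigr => c _; rewrite cond_exp_mul_indic //; exact: measurable_funPTI.
Qed.

Lemma cond_exp_mul_ge0 (phi : S -> R) :
  measurable_fun setT phi -> (forall y, 0 <= phi y) ->
  mu.-integrable setT (fun x => (Y x * phi (W x))%:E) ->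
  mu.-integrable setT (fun x => (h (W x) * phi (W x))%:E) ->
  (\int[mu]_x (Y x * phi (W x))%:E = \int[mu]_x (h (W x) * phi (W x))%:E)%E.
Proof.
move=> mphi phi_ge0 iYphi ihphi.
have mphiE : measurable_fun setT (EFin \o phi) by exact/measurable_EFinP.
have cvgY := cvg_integral_mul_approx mphiE phi_ge0 mY iYphi.
have cvgh := cvg_integral_mul_approx mphiE phi_ge0 mhW ihphi.
set sn := nnsfun_approx measurableT mphiE in cvgY cvgh.
have snE : (fun n => \int[mu]_x (Y x * sn n (W x))%:E)%E
    = (fun n => \int[mu]_x (h (W x) * sn n (W x))%:E)%E.
  by apply/funext => n; exact: cond_exp_mul_sfun.
rewrite snE in cvgY; exact: cvg_unique cvgY cvgh.
Qed.

Lemma cond_exp_mul (phi : S -> R) : measurable_fun setT phi ->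
  mu.-integrable setT (fun x => (Y x * phi (W x))%:E) ->
  mu.-integrable setT (fun x => (h (W x) * phi (W x))%:E) ->
  (\int[mu]_x (Y x * phi (W x))%:E = \int[mu]_x (h (W x) * phi (W x))%:E)%E.
Proof.
move=> mphi iYphi ihphi.
pose pp y := (phi y + `|phi y|) / 2.
pose pn y := (`|phi y| - phi y) / 2.
have phiE y : phi y = pp y - pn y by rewrite /pp /pn; field.
have mpp : measurable_fun setT pp.
  by apply: measurable_funM => //; apply: measurable_funD => //; exact: measurableT_comp.
have mpn : measurable_fun setT pn.
  by apply: measurable_funM => //; apply: measurable_funB => //; exact: measurableT_comp.
have phi_bound y : - `|phi y| <= phi y /\ phi y <= `|phi y|.
  by split; [rewrite lerNl -normrN ler_norm | exact: ler_norm].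
have pp_ge0 y : 0 <= pp y by have [? ?] := phi_bound y; rewrite /pp; lra.
have pn_ge0 y : 0 <= pn y by have [? ?] := phi_bound y; rewrite /pn; lra.
have pp_le y : `|pp y| <= `|phi y|.
  by rewrite ger0_norm //; have [? ?] := phi_bound y; rewrite /pp; lra.
have pn_le y : `|pn y| <= `|phi y|.
  by rewrite ger0_norm //; have [? ?] := phi_bound y; rewrite /pn; lra.
have dominated (u : T -> R) (q : S -> R) : measurable_fun setT u ->
    measurable_fun setT q -> (forall y, `|q y| <= `|phi y|) ->
    mu.-integrable setT (fun x => (u x * phi (W x))%:E) ->
    mu.-integrable setT (fun x => (u x * q (W x))%:E).
  move=> m_u mq q_le iu; apply: (le_integrable _ _ _ iu) => //.
    by apply/measurable_EFinP; apply: measurable_funM => //; exact: measurableT_comp.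
  by move=> x _ /=; rewrite lee_fin !normrM ler_wpM2l.
have splitE (u : T -> R) : measurable_fun setT u ->
    mu.-integrable setT (fun x => (u x * phi (W x))%:E) ->
    (\int[mu]_x (u x * phi (W x))%:E = \int[mu]_x (u x * pp (W x))%:E
       - \int[mu]_x (u x * pn (W x))%:E)%E.
  move=> m_u iu; rewrite -integralB //; try exact: dominated.
  by apply: eq_integral => x _; rewrite -EFinB -mulrBr -phiE.
rewrite (splitE _ mY iYphi) (splitE _ mhW ihphi).
rewrite (cond_exp_mul_ge0 mpp pp_ge0 (dominated _ _ mY mpp pp_le iYphi)
  (dominated _ _ mhW mpp pp_le ihphi)).
by rewrite (cond_exp_mul_ge0 mpn pn_ge0 (dominated _ _ mY mpn pn_le iYphi)
  (dominated _ _ mhW mpn pn_le ihphi)).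
Qed.

Lemma cond_exp_sqr_integrable : mu.-integrable setT (fun x => (Y x ^+ 2)%:E) ->
  mu.-integrable setT (fun x => (h (W x) ^+ 2)%:E).
Proof.
move=> iY2.
pose t n x := truncate n (h (W x)).
have mt n : measurable_fun setT (t n) by exact: measurable_truncate.
have mtS n : measurable_fun setT (fun y => truncate n (h y)) by exact: measurable_truncate.
have htE n x : h (W x) * t n x = t n x ^+ 2.
  by rewrite /t /truncate; case: ifPn => _; rewrite expr2 // !mulr0.
have bounded (u : T -> R) n : mu.-integrable setT (EFin \o u) -> measurable_fun setT u ->
    mu.-integrable setT (fun x => (u x * t n x)%:E).
  move=> iu m_u.
  apply: (le_integrable _ _ _ (integrableZl measurableT n%:R (integrable_norm iu))) => //.
    by apply/measurable_EFinP; apply: measurable_funM.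
  move=> x _ /=; rewrite lee_fin normrM (normrM n%:R) normr_id normr_nat mulrC.
  by rewrite ler_wpM2r // /t /truncate; case: ifPn => // _; rewrite normr0.
have it2 n : mu.-integrable setT (fun x => (t n x ^+ 2)%:E).
  by under eq_fun do rewrite -htE; exact: bounded.
(* [t_n(W)^2 = h(W) t_n(W)] has the same integral as [Y t_n(W) <= (Y^2 + t_n(W)^2) / 2]. *)
have le_Y2 n : (\int[mu]_x (t n x ^+ 2)%:E <= \int[mu]_x (Y x ^+ 2)%:E)%E.
  have YtE : (\int[mu]_x (t n x ^+ 2)%:E = \int[mu]_x (Y x * t n x)%:E)%E.
    under eq_integral do rewrite -htE.
    by rewrite (cond_exp_mul (mtS n)) //; [exact: bounded | under eq_fun do rewrite htE].
  have iYt : mu.-integrable setT (fun x => (Y x ^+ 2 + t n x ^+ 2)%:E).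
    by under eq_fun do rewrite EFinD; exact: integrableD.
  have le_half : (\int[mu]_x (Y x * t n x)%:E <=
      \int[mu]_x ((2^-1)%:E * (Y x ^+ 2 + t n x ^+ 2)%:E))%E.
    apply: le_integral => //; [exact: bounded | exact: integrableZl |].
    move=> x _; rewrite -EFinM lee_fin.
    by have := sqr_ge0 (Y x - t n x); rewrite sqrrB; lra.
  move: le_half; rewrite -YtE (integralZl measurableT) //.
  under [X in (_ <= _ * X)%E -> _]eq_integral do rewrite EFinD.
  rewrite (integralD measurableT) // -(fineK (integrable_fin_num measurableT iY2)).
  rewrite -(fineK (integrable_fin_num measurableT (it2 n))).
  by rewrite -EFinD -EFinM !lee_fin; lra.
apply/integrableP; split; first by apply/measurable_EFinP; exact: measurable_funX.
under eq_integral do rewrite abse_EFin ger0_norm ?sqr_ge0 //.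
apply: le_lt_trans (integral_sqr_le_of_truncate mhW le_Y2) _.
have /integrableP[_] := iY2.
by under eq_integral do rewrite abse_EFin ger0_norm ?sqr_ge0 //.
Qed.

Lemma cond_exp_least_squares (k : S -> R) : measurable_fun setT k ->
  square_integrable mu Y ->
  (\int[mu]_x ((Y x - h (W x)) ^+ 2)%:E <= \int[mu]_x ((Y x - k (W x)) ^+ 2)%:E)%E.
Proof.
move=> mk sY.
have mkW : measurable_fun setT (k \o W) by exact: measurableT_comp.
have mYk : measurable_fun setT (fun x => Y x - k (W x)) by exact: measurable_funB.
have [ik|nik] := pselect
    (mu.-integrable setT (fun x => ((Y x - k (W x)) ^+ 2)%:E)); last first.
  suff -> : (\int[mu]_x ((Y x - k (W x)) ^+ 2)%:E = +oo)%E by exact: leey.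
  apply/eqP; rewrite -leye_eq leNgt; apply/negP => fin; apply: nik.
  apply/integrableP; split; first by apply/measurable_EFinP; exact: measurable_funX.
  by under eq_integral do rewrite abse_EFin ger0_norm ?sqr_ge0 //.
have shW : square_integrable mu (h \o W) := conj mhW (cond_exp_sqr_integrable sY.2).
have skW : square_integrable mu (k \o W).
  have -> : k \o W = fun x => Y x - (Y x - k (W x)) by apply/funext => x /=; ring.
  exact: square_integrableB sY (conj mYk ik).
have sYh : square_integrable mu (fun x => Y x - h (W x)) by exact: square_integrableB.
have shk : square_integrable mu (fun x => h (W x) - k (W x)) by exact: square_integrableB.
have orth : (\int[mu]_x ((Y x - h (W x)) * (h (W x) - k (W x)))%:E = 0)%E.
  have iY' := square_integrable_mul sY shk.
  have ih' := square_integrable_mul shW shk.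
  transitivity (\int[mu]_x ((Y x * (h (W x) - k (W x)))%:E
                            - (h (W x) * (h (W x) - k (W x)))%:E))%E.
    by apply: eq_integral => x _; rewrite -EFinB -mulrBl.
  rewrite integralB // (cond_exp_mul (measurable_funB mh mk) iY' ih') subee //.
  exact: integrable_fin_num ih'.
have pythagoras : (\int[mu]_x ((Y x - k (W x)) ^+ 2)%:E =
    \int[mu]_x ((Y x - h (W x)) ^+ 2)%:E
    + \int[mu]_x ((h (W x) - k (W x)) ^+ 2)%:E)%E.
  transitivity (\int[mu]_x (((Y x - h (W x)) ^+ 2)%:E + ((h (W x) - k (W x)) ^+ 2)%:E
      + 2%:E * ((Y x - h (W x)) * (h (W x) - k (W x)))%:E))%E.
    by apply: eq_integral => x _; rewrite -EFinM -!EFinD; congr (_%:E); ring.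
  rewrite integralD //; last 2 first.
  - exact: integrableD sYh.2 shk.2.
  - exact: integrableZl (square_integrable_mul sYh shk).
  by rewrite integralZl ?orth ?mule0 ?adde0 ?integralD //;
    [exact: sYh.2 | exact: shk.2 | exact: square_integrable_mul].
rewrite pythagoras leeDl //.
by apply: integral_ge0 => x _; rewrite lee_fin sqr_ge0.
Qed.

End cond_exp.

Lemma cond_exp_tower d (T : measurableType d) d1 (T1 : measurableType d1)
  d2 (T2 : measurableType d2) (R : realType) (mu : {measure set T -> \bar R})
  (U : T -> R) (V : T -> T1) (g : T1 -> R) (phi : T1 -> T2) (W : T -> T2) (h : T2 -> R) :
  measurable_fun setT phi -> (forall x, W x = phi (V x)) ->
  is_cond_exp mu U V g -> is_cond_exp mu (g \o V) W h -> is_cond_exp mu U W h.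
Proof.
move=> mphi WE [_ iU _ ceU] [mh _ ih ceg]; split => // B mB.
have preimE : W @^-1` B = V @^-1` (phi @^-1` B).
  by apply/seteqP; split => x /=; rewrite WE.
rewrite preimE ceU; last exact: measurableT_preimage.
by rewrite -preimE; exact: ceg.
Qed.

Section product_probability.
Context d1 d2 (T1 : measurableType d1) (T2 : measurableType d2) (R : realType).
Variables (L : probability T1 R) (Q : probability T2 R).

Lemma integral_fst_ge0 (g : T1 -> \bar R) :
  measurable_fun setT g -> (forall x, (0 <= g x)%E) ->
  (\int[(L \x Q)%E]_w g w.1 = \int[L]_x g x)%E.
Proof.
move=> mg g_ge0; rewrite fubini_tonelli1 //=; last exact: measurableT_comp.
apply: eq_integral => x _; rewrite /fubini_F /= integral_cst //.
by have /= -> := probability_setT Q; rewrite mule1.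
Qed.

Lemma integrable_fst (g : T1 -> \bar R) : measurable_fun setT g ->
  (L \x Q)%E.-integrable setT (fun w => g w.1) <-> L.-integrable setT g.
Proof.
move=> mg.
have E := integral_fst_ge0 (measurableT_comp (@abse_measurable R setT) mg)
  (fun x => abse_ge0 (g x)).
split => /integrableP [_ fin]; apply/integrableP; split.
- exact: mg.
- by move: fin; rewrite E.
- exact: measurableT_comp.
- by rewrite E.
Qed.

Lemma integral_fst (g : T1 -> \bar R) : L.-integrable setT g ->
  (\int[(L \x Q)%E]_w g w.1 = \int[L]_x g x)%E.
Proof.
move=> ig; have mg := measurable_int _ ig.
rewrite -integral12_prod_meas1; last exact/(integrable_fst mg).
apply: eq_integral => x _; rewrite /fubini_F /= integral_cst //.
by have /= -> := probability_setT Q; rewrite mule1.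
Qed.

Lemma integral_fst_preimage (g : T1 -> \bar R) (D : set T1) : measurable D ->
  L.-integrable D g ->
  (\int[(L \x Q)%E]_(w in fst @^-1` D) g w.1 = \int[L]_(x in D) g x)%E.
Proof.
move=> mD ig; rewrite (integral_mkcond (fst @^-1` D)) (integral_mkcond D).
by rewrite -integral_fst; last exact: (integrable_mkcond g mD).1.
Qed.

End product_probability.

Section simdg_measurable.
Context (R : realType).

Lemma measurable_mv m n (M : 'M[R]_(m, n)) : measurable_fun setT (mv M).
Proof.
apply/measurable_fun_tnthP => i.
have -> : @tnth m R ^~ i \o mv M = (fun z => \sum_(j <- index_enum 'I_n) M i j * tnth z j).
  by apply/funext => z /=; rewrite /mv tnth_mktuple.
by apply: measurable_sum => j; apply: measurable_funM => //; exact: measurable_tnth.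
Qed.

Lemma measurable_vadd n d (T : measurableType d) (a b : T -> n.-tuple R) :
  measurable_fun setT a -> measurable_fun setT b ->
  measurable_fun setT (fun x => vadd (a x) (b x)).
Proof.
move=> ma mb; apply/measurable_fun_tnthP => i.
have -> : @tnth n R ^~ i \o (fun x => vadd (a x) (b x)) =
    (fun x => tnth (a x) i + tnth (b x) i).
  by apply/funext => x /=; rewrite /vadd tnth_mktuple.
by apply: measurable_funD; exact: measurableT_comp (measurable_tnth i) _.
Qed.

Variables (p r : nat) (M0 : 'M[R]_(p, r)).

Lemma measurable_Uc : measurable_fun setT (@Uc R p r).
Proof. exact: measurableT_comp measurable_fst measurable_fst. Qed.

Lemma measurable_Vc : measurable_fun setT (@Vc R p r).
Proof. exact: measurableT_comp measurable_snd measurable_fst. Qed.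

Lemma measurable_Xc : measurable_fun setT (Xc M0).
Proof.
apply: measurable_vadd; last exact: measurable_Vc.
exact: measurableT_comp (measurable_mv M0) measurable_snd.
Qed.

Lemma mv_trmx_Xc k (Rm : 'M[R]_(p, k)) : Rm^T *m M0 = 0 ->
  forall w, mv Rm^T (Xc M0 w) = mv Rm^T (Vc w).
Proof.
move=> RmM0 w; apply: eq_from_tnth => i.
rewrite /Xc /mv /vadd !tnth_mktuple.
under eq_bigr do rewrite tnth_mktuple mulrDr.
rewrite big_split /= [X in X + _](_ : _ = 0) ?add0r //.
under eq_bigr do rewrite tnth_mktuple mulr_sumr.
rewrite exchange_big /= big1 // => l _.
under eq_bigr do rewrite mulrA.
have := congr1 (fun N : 'M[R]_(k, r) => N i l) RmM0; rewrite !mxE => RmM0il.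
by rewrite -mulr_suml RmM0il mul0r.
Qed.

Lemma basis_ker_trmx_mul_eq0 k (Rm : 'M[R]_(p, k)) :
  ((\rank M0 < p)%N -> k = (p - \rank M0)%N /\ orthonormal_basis_ker M0 Rm) ->
  (\rank M0 = p -> k = 1%N /\ Rm = 0) ->
  Rm^T *m M0 = 0.
Proof.
move=> rk_lt rk_eq; have := rank_leq_row M0; rewrite leq_eqVlt => /orP[/eqP rk | lt].
  by case: (rk_eq rk) => _ ->; rewrite trmx0 mul0mx.
by case: (rk_lt lt) => _ [_ M0Rm _]; rewrite -[M0]trmxK -trmx_mul M0Rm trmx0.
Qed.

End simdg_measurable.

Section simdg_cond_exp.
Variables (R : realType) (p r : nat) (M0 : 'M[R]_(p, r)).
Variables (L0 : probability (R * p.-tuple R)%type R) (gamma0 : p.-tuple R -> R).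

Lemma cond_exp_marginal (Q : probability (r.-tuple R) R) :
  is_cond_exp (L0 \x Q)%E (@Uc R p r) (@Vc R p r) gamma0 ->
  is_cond_exp L0 fst snd gamma0.
Proof.
case=> mg iU iG ceU.
have mfst : measurable_fun setT (EFin \o (@fst R (p.-tuple R))).
  by apply/measurable_EFinP; exact: measurable_fst.
have mgsnd : measurable_fun setT (EFin \o (gamma0 \o (@snd R (p.-tuple R)))).
  by apply/measurable_EFinP; apply: measurableT_comp => //; exact: measurable_snd.
have iU' : L0.-integrable setT (EFin \o fst) by apply/(integrable_fst L0 Q mfst).
have iG' : L0.-integrable setT (EFin \o (gamma0 \o snd)) by apply/(integrable_fst L0 Q mgsnd).
split => // B mB.
have msndB : measurable (snd @^-1` B : set (R * p.-tuple R)).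
  by apply: measurableT_preimage => //; exact: measurable_snd.
rewrite -(integral_fst_preimage Q msndB); last exact: integrableS iU'.
by rewrite -(integral_fst_preimage Q msndB); [exact: ceU | exact: integrableS iG'].
Qed.

Hypothesis ceL : is_cond_exp L0 fst snd gamma0.

Lemma integrable_Uc (Q : probability (r.-tuple R) R) :
  (L0 \x Q)%E.-integrable setT (EFin \o @Uc R p r).
Proof.
have mfst : measurable_fun setT (EFin \o (@fst R (p.-tuple R))).
  by apply/measurable_EFinP; exact: measurable_fst.
by case: ceL => _ iU _ _; apply/(integrable_fst L0 Q mfst).
Qed.

(* Integrate [Z] out first: for fixed [Z = z], the event [X \in B] only involves [V]. *)
Lemma integral_Uc_Xc_preimage (Q : probability (r.-tuple R) R) (B : set (p.-tuple R)) :
  measurable B ->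
  (L0 \x Q)%E.-integrable setT (EFin \o (gamma0 \o @Vc R p r)) ->
  (\int[(L0 \x Q)%E]_(w in Xc M0 @^-1` B) (Uc w)%:E =
   \int[(L0 \x Q)%E]_(w in Xc M0 @^-1` B) (gamma0 (Vc w))%:E)%E.
Proof.
move=> mB iG; case: ceL => _ _ _ ceU.
have mXB : measurable (Xc M0 @^-1` B).
  by apply: measurableT_preimage => //; exact: measurable_Xc.
rewrite (integral_mkcond (Xc M0 @^-1` B)).
rewrite (integral_mkcond (Xc M0 @^-1` B) (fun w => (gamma0 (Vc w))%:E)).
have iU1 : (L0 \x Q)%E.-integrable setT ((fun w => (Uc w)%:E) \_ (Xc M0 @^-1` B)).
  by apply/(integrable_mkcond _ mXB); exact: integrableS (integrable_Uc Q).
have iG1 : (L0 \x Q)%E.-integrable setT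
    ((fun w => (gamma0 (Vc w))%:E) \_ (Xc M0 @^-1` B)).
  by apply/(integrable_mkcond _ mXB); exact: integrableS iG.
rewrite -(integral21_prod_meas1 iU1) -(integral21_prod_meas1 iG1).
apply: eq_integral => z _; rewrite /fubini_G.
pose Bz := (fun v => vadd (mv M0 z) v) @^-1` B.
have mBz : measurable Bz.
  by apply: measurableT_preimage => //; apply: measurable_vadd => //; exact: measurable_cst.
have := ceU Bz mBz.
rewrite (integral_mkcond (snd @^-1` Bz)).
by rewrite (integral_mkcond (snd @^-1` Bz) (fun x => (gamma0 x.2)%:E)).
Qed.

Lemma cond_exp_Uc_Xc (Q : probability (r.-tuple R) R) (g : p.-tuple R -> R) :
  is_cond_exp (L0 \x Q)%E (gamma0 \o @Vc R p r) (Xc M0) g ->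
  is_cond_exp (L0 \x Q)%E (@Uc R p r) (Xc M0) g.
Proof.
case=> mg iG igX ceG; split => //; first exact: integrable_Uc.
by move=> B mB; rewrite integral_Uc_Xc_preimage //; exact: ceG.
Qed.

End simdg_cond_exp.

Lemma risk_residual (R : realType) (p r : nat) (M0 : 'M[R]_(p, r)) (f0 f : p.-tuple R -> R)
  (P : {measure set Omega R p r -> \bar R}) :
  risk M0 f0 P f = (\int[P]_w ((Uc w - (f (Xc M0 w) - f0 (Xc M0 w))) ^+ 2)%:E)%E.
Proof. by apply: eq_integral => w _; rewrite /Yc; congr ((_ ^+ 2)%:E); ring. Qed.

Section bcf_risk.
Variables (R : realType) (p r k : nat) (M0 : 'M[R]_(p, r)) (f0 : p.-tuple R -> R).
Variables (L0 : probability (R * p.-tuple R)%type R) (gamma0 : p.-tuple R -> R).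
Variables (Rm : 'M[R]_(p, k)) (hstar : k.-tuple R -> R) (Qtr : probability (r.-tuple R) R).
Hypotheses (mf0 : measurable_fun setT f0) (ceL : is_cond_exp L0 fst snd gamma0).
Hypotheses (U2 : L0.-integrable setT (fun x => (x.1 ^+ 2)%:E)) (RmM0 : Rm^T *m M0 = 0).
Hypothesis ceH :
  is_cond_exp (L0 \x Qtr)%E (@Uc R p r) (fun w => mv Rm^T (Xc M0 w)) hstar.

Let measurable_RX : measurable_fun setT (fun w => mv Rm^T (Xc M0 w)).
Proof. exact: measurableT_comp (measurable_mv Rm^T) (measurable_Xc M0). Qed.

Lemma square_integrable_Uc (Q : probability (r.-tuple R) R) :
  square_integrable (L0 \x Q)%E (@Uc R p r).
Proof.
split; first exact: measurable_Uc.
have msqr : measurable_fun setT (fun x : R * p.-tuple R => (x.1 ^+ 2)%:E).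
  by apply/measurable_EFinP; apply: measurable_funX; exact: measurable_fst.
exact/(integrable_fst L0 Q msqr).
Qed.

Lemma risk_ge_cond_exp_Xc (Q : probability (r.-tuple R) R) f (gX : p.-tuple R -> R) :
  measurable_fun setT f ->
  is_cond_exp (L0 \x Q)%E (gamma0 \o @Vc R p r) (Xc M0) gX ->
  (\int[(L0 \x Q)%E]_w ((Uc w - gX (Xc M0 w)) ^+ 2)%:E <= risk M0 f0 (L0 \x Q)%E f)%E.
Proof.
move=> mf ceX; rewrite risk_residual.
have le_min := cond_exp_least_squares (measurable_Xc M0) (cond_exp_Uc_Xc ceL ceX)
  (measurable_funB mf mf0) (square_integrable_Uc Q).
exact: le_min.
Qed.

(* [R^T X = R^T V] does not involve [Z]. *)
Lemma integral_Uc_RX_indep (Q Q' : probability (r.-tuple R) R) (g : k.-tuple R -> R) :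
  measurable_fun setT g ->
  (\int[(L0 \x Q)%E]_w ((Uc w - g (mv Rm^T (Xc M0 w))) ^+ 2)%:E =
   \int[(L0 \x Q')%E]_w ((Uc w - g (mv Rm^T (Xc M0 w))) ^+ 2)%:E)%E.
Proof.
move=> mg; pose psi x := ((x.1 - g (mv Rm^T x.2)) ^+ 2)%:E.
have mpsi : measurable_fun setT psi.
  apply/measurable_EFinP; apply: measurable_funX; apply: measurable_funB.
    exact: measurable_fst.
  by apply: measurableT_comp mg _; exact: measurableT_comp (measurable_mv _) measurable_snd.
have psi_ge0 x : (0 <= psi x)%E by rewrite lee_fin sqr_ge0.
have psiE (Q1 : probability (r.-tuple R) R) :
    (\int[(L0 \x Q1)%E]_w ((Uc w - g (mv Rm^T (Xc M0 w))) ^+ 2)%:E = \int[L0]_x psi x)%E.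
  rewrite -(integral_fst_ge0 L0 Q1 mpsi psi_ge0).
  by apply: eq_integral => w _; rewrite (mv_trmx_Xc RmM0).
by rewrite !psiE.
Qed.

Lemma bcf_risk_le (Q : probability (r.-tuple R) R) (gR : k.-tuple R -> R)
    (gX : p.-tuple R -> R) (f : p.-tuple R -> R) (t : R) : 0 < t -> measurable_fun setT f ->
  is_cond_exp (L0 \x Q)%E (gamma0 \o @Vc R p r) (fun w => mv Rm^T (Xc M0 w)) gR ->
  is_cond_exp (L0 \x Q)%E (gamma0 \o @Vc R p r) (Xc M0) gX ->
  (risk M0 f0 (L0 \x Qtr)%E (fun x => (f0 x + hstar (mv Rm^T x))%R) <=
   (1 + t)%:E * risk M0 f0 (L0 \x Q)%E f +
   (1 + t^-1)%:E *
     \int[(L0 \x Q)%E]_w ((gR (mv Rm^T (Xc M0 w)) - gX (Xc M0 w)) ^+ 2)%:E)%E.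
Proof.
move=> t_gt0 mf ceR ceX.
have mgR : measurable_fun setT gR by case: ceR.
have mgX : measurable_fun setT gX by case: ceX.
have mgRX := measurableT_comp mgR measurable_RX.
have mgXX := measurableT_comp mgX (measurable_Xc M0).
rewrite risk_residual.
under eq_integral do rewrite [f0 _ + _]addrC addrK.
apply: le_trans (cond_exp_least_squares measurable_RX ceH mgR (square_integrable_Uc Qtr)) _.
rewrite (integral_Uc_RX_indep Qtr Q mgR).
have splitE w : Uc w - gR (mv Rm^T (Xc M0 w)) =
    (Uc w - gX (Xc M0 w)) + (gX (Xc M0 w) - gR (mv Rm^T (Xc M0 w))) by ring.
under eq_integral do rewrite splitE.
apply: le_trans (le_integral_sqrD _ t_gt0 _ _) _.
- by apply: measurable_funB => //; exact: measurable_Uc.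
- exact: measurable_funB.
under [X in (_ + _ * X <= _)%E]eq_integral do rewrite -sqrrN opprB.
apply: leeD; apply: lee_wpmul2l => //; first by rewrite lee_fin; lra.
- exact: risk_ge_cond_exp_Xc.
- by rewrite lee_fin addr_ge0 // invr_ge0 ltW.
Qed.

Lemma eq_risk_invariant (Q0 : set (probability (r.-tuple R) R)) F f Q :
  measurable_fun setT f -> invariant_set M0 f0 L0 Q0 Qtr F f -> Q0 Q ->
  risk M0 f0 (L0 \x Q)%E f = risk M0 f0 (L0 \x Qtr)%E f.
Proof.
move=> mf [_ law] Q0Q; apply/esym/eq_integral_sqr_of_law; last exact: law.
apply: measurable_funB; last exact: measurableT_comp mf (measurable_Xc M0).
apply: measurable_funD; last exact: measurable_Uc.
exact: measurableT_comp mf0 (measurable_Xc M0).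
Qed.

Lemma bcf_risk_le_invariant (Q0 : set (probability (r.-tuple R) R)) F
    (gR : probability (r.-tuple R) R -> k.-tuple R -> R)
    (gX : probability (r.-tuple R) R -> p.-tuple R -> R) :
  (forall f, F f -> measurable_fun setT f) ->
  (forall Q, Q0 Q ->
     is_cond_exp (L0 \x Q)%E (gamma0 \o @Vc R p r)
       (fun w => mv Rm^T (Xc M0 w)) (gR Q) /\
     is_cond_exp (L0 \x Q)%E (gamma0 \o @Vc R p r) (Xc M0) (gX Q)) ->
  ereal_inf [set (\int[(L0 \x Q)%E]_w
                   ((gR Q (mv Rm^T (Xc M0 w)) - gX Q (Xc M0 w)) ^+ 2)%:E)%E
            | Q in Q0] = 0%E ->
  forall f, invariant_set M0 f0 L0 Q0 Qtr F f ->
  (risk M0 f0 (L0 \x Qtr)%E (fun x => (f0 x + hstar (mv Rm^T x))%R) <=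
   risk M0 f0 (L0 \x Qtr)%E f)%E.
Proof.
move=> mF ceQ gap0 f f_inv; have mf := mF f f_inv.1.
have risk_ge0 : (0 <= risk M0 f0 (L0 \x Qtr)%E f)%E.
  by apply: integral_ge0 => w _; rewrite lee_fin sqr_ge0.
have [->|risk_fin] := eqVneq (risk M0 f0 (L0 \x Qtr)%E f) +oo%E; first exact: leey.
have riskE : risk M0 f0 (L0 \x Qtr)%E f = (fine (risk M0 f0 (L0 \x Qtr)%E f))%:E.
  by rewrite fineK // ge0_fin_numE // ltey.
rewrite riskE; apply: lee_of_forall_perturb => [|t t_gt0 _]; first exact: fine_ge0.
have : (ereal_inf [set (\int[(L0 \x Q)%E]_w
                   ((gR Q (mv Rm^T (Xc M0 w)) - gX Q (Xc M0 w)) ^+ 2)%:E)%E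
            | Q in Q0] < (t ^+ 2)%:E)%E by rewrite gap0 lte_fin exprn_gt0.
case/ereal_inf_lt => _ [Q Q0Q <-] gap_lt.
have [ceR ceX] := ceQ Q Q0Q.
apply: le_trans (bcf_risk_le t_gt0 mf ceR ceX) _.
rewrite (eq_risk_invariant mf f_inv Q0Q) riskE.
apply: le_trans (leeD (lexx _) (lee_wpmul2l _ (ltW gap_lt))) _.
  by rewrite lee_fin addr_ge0 // invr_ge0 ltW.
rewrite -!EFinM -EFinD lee_fin.
have -> : (1 + t^-1) * t ^+ 2 = t ^+ 2 + t by field; rewrite gt_eqF.
by rewrite addrA.
Qed.

End bcf_risk.

Lemma eq_risk_ae (R : realType) (p r : nat) (M0 : 'M[R]_(p, r)) (f0 f g : p.-tuple R -> R)
  (P : {measure set Omega R p r -> \bar R}) :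
  measurable_fun setT f0 -> measurable_fun setT f -> measurable_fun setT g ->
  {ae P, forall w, f (Xc M0 w) = g (Xc M0 w)} -> risk M0 f0 P f = risk M0 f0 P g.
Proof.
move=> mf0 mf mg fg; have mX := measurable_Xc M0.
have mres (u : p.-tuple R -> R) : measurable_fun setT u ->
    measurable_fun setT (fun w => ((Yc M0 f0 w - u (Xc M0 w)) ^+ 2)%:E).
  move=> m_u; apply/measurable_EFinP; apply: measurable_funX.
  apply: measurable_funB; last exact: measurableT_comp m_u mX.
  by apply: measurable_funD; [exact: measurableT_comp mf0 mX | exact: measurable_Uc].
apply: (ae_eq_integral _ _ measurableT (mres _ mf) (mres _ mg)).
by apply: filterS fg => w fgw _; rewrite fgw.
Qed.

Theorem corollary1 (R : realType) (p r : nat)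
  (f0 : p.-tuple R -> R) (M0 : 'M[R]_(p, r))
  (L0 : probability (R * p.-tuple R)%type R)
  (Q0 : set (probability (r.-tuple R) R))
  (Qtr : probability (r.-tuple R) R)
  (F : set (p.-tuple R -> R))
  (k : nat) (Rm : 'M[R]_(p, k))
  (gamma0 : p.-tuple R -> R) (hstar : k.-tuple R -> R)
  (gR : probability (r.-tuple R) R -> k.-tuple R -> R)
  (gX : probability (r.-tuple R) R -> p.-tuple R -> R) :
  (* SIMDG *)
  measurable_fun setT f0 ->
  L0.-integrable setT (fun w => (w.1 ^+ 2 + \sum_(i < p) tnth w.2 i ^+ 2)%:E) ->
  (\int[L0]_w (w.1)%:E = 0)%E ->
  (forall i : 'I_p, \int[L0]_w (tnth w.2 i)%:E = 0)%E ->
  (* standing setting *)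
  (exists C : R, forall Q, Q0 Q ->
     (\int[(L0 \x Q)%E]_w ((f0 (Xc M0 w)) ^+ 2)%:E <= C%:E)%E) ->
  Q0 Qtr ->
  (forall i : 'I_r, Qtr.-integrable setT (fun z => (tnth z i ^+ 2)%:E)) ->
  (forall i : 'I_r, \int[Qtr]_z (tnth z i)%:E = 0)%E ->
  posdef (second_moment Qtr) ->
  (* the function class *)
  (forall f, F f -> measurable_fun setT f) ->
  (* R: orthonormal basis of ker(M0^T), or the zero vector if rank M0 = p *)
  ((\rank M0 < p)%N -> k = (p - \rank M0)%N /\ orthonormal_basis_ker M0 Rm) ->
  (\rank M0 = p -> k = 1%N /\ Rm = 0) ->
  (* gamma0(v) = E_Ptr[U | V = v] *)
  is_cond_exp (L0 \x Qtr)%E (@Uc R p r) (@Vc R p r) gamma0 ->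
  (* f_star(x) = f0(x) + hstar(R^T x), hstar(.) = E_Ptr[gamma0(V) | R^T X = .] *)
  is_cond_exp (L0 \x Qtr)%E (gamma0 \o @Vc R p r)
    (fun w => mv Rm^T (Xc M0 w)) hstar ->
  (* f_star is in I_0 (it agrees P_tr-a.s. with an invariant f in F) *)
  (exists fs, invariant_set M0 f0 L0 Q0 Qtr F fs /\
     {ae (L0 \x Qtr)%E, forall w,
        fs (Xc M0 w) = f0 (Xc M0 w) + hstar (mv Rm^T (Xc M0 w))}) ->
  (* assumption (i) *)
  (forall f g, F f -> F g -> forall Q, Q0 Q ->
     {ae (L0 \x Qtr)%E, forall w, f (Xc M0 w) = g (Xc M0 w)} ->
     {ae (L0 \x Q)%E, forall w, f (Xc M0 w) = g (Xc M0 w)}) ->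
  (* versions of E_P[gamma0(V) | R^T X] and E_P[gamma0(V) | X] *)
  (forall Q, Q0 Q ->
     is_cond_exp (L0 \x Q)%E (gamma0 \o @Vc R p r)
       (fun w => mv Rm^T (Xc M0 w)) (gR Q) /\
     is_cond_exp (L0 \x Q)%E (gamma0 \o @Vc R p r) (Xc M0) (gX Q)) ->
  (* assumption (ii) *)
  ereal_inf [set (\int[(L0 \x Q)%E]_w
                   ((gR Q (mv Rm^T (Xc M0 w)) - gX Q (Xc M0 w)) ^+ 2)%:E)%E
            | Q in Q0] = 0%E ->
  (* conclusion *)
  risk M0 f0 (L0 \x Qtr)%E (fun x => f0 x + hstar (mv Rm^T x))
  = ereal_inf [set risk M0 f0 (L0 \x Qtr)%E f
              | f in invariant_set M0 f0 L0 Q0 Qtr F].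
Proof.
move=> mf0 iL0 _ _ _ _ _ _ _ mF rk_lt rk_eq ceU ceH [fs [fs_inv fs_ae]] _ ceQ gap0.
have RmM0 := basis_ker_trmx_mul_eq0 rk_lt rk_eq.
have ceL := cond_exp_marginal ceU.
have U2 : L0.-integrable setT (fun x => (x.1 ^+ 2)%:E).
  apply: (le_integrable measurableT _ _ iL0).
    by apply/measurable_EFinP; apply: measurable_funX; exact: measurable_fst.
  move=> x _; have sum_ge0 : 0 <= \sum_(i < p) tnth x.2 i ^+ 2.
    by apply: sumr_ge0 => i _; exact: sqr_ge0.
  rewrite !abse_EFin lee_fin ger0_norm ?sqr_ge0 // ger0_norm ?lerDl //.
  by rewrite addr_ge0 ?sqr_ge0.
have mRV := measurable_mv Rm^T.
have ceHU := cond_exp_tower mRV (mv_trmx_Xc RmM0) ceU ceH.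
apply/eqP; rewrite eq_le; apply/andP; split.
  apply: le_ereal_inf_tmp => _ [f f_inv <-].
  exact: (bcf_risk_le_invariant mf0 ceL U2 RmM0 ceHU mF ceQ gap0 f_inv).
have mfstar : measurable_fun setT (fun x => f0 x + hstar (mv Rm^T x)).
  by apply: measurable_funD => //; apply: measurableT_comp mRV; case: ceH.
rewrite (eq_risk_ae mf0 mfstar (mF fs fs_inv.1)); first by apply: ereal_inf_lbound; exists fs.
by apply: filterS fs_ae => w ->.
Qed.
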